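(* Let $K$ be a field, $S=K[x_1,\dots,x_n]$, $A\subseteq\{1,\dots,n\}$, $f=\prod_{j\in A}x_j$, and let $J\subset I\subset S$ be monomial ideals. Then $$\operatorname{fdepth} I/J\le \operatorname{fdepth}(I/J)_f.$$
   Context: $S_f=K[x_1,\dots,x_n,x_j^{-1}:j\in A]$ and $(I/J)_f=IS_f/JS_f$. Let $R$ be $S$ or $S_f$ and $J\subset I\subset R$ monomial ideals (ideals generated by monomials). A prime filtration of $I/J$ is a chain $\mathcal F: J=J_0\subset J_1\subset\cdots\subset J_r=I$ of monomial ideals of $R$ such that $J_i/J_{i-1}\cong (R/P_i)(-a_i)$ as $\mathbb Z^n$-graded modules, with $a_i\in\mathbb Z^n$ and each $P_i$ a monomial prime ideal of $R$. The support of $\mathcal F$ is $\operatorname{Supp}(\mathcal F)=\{P_1,\dots,P_r\}$, $\operatorname{fdepth}\mathcal F=\min\{\dim R/P: P\in\operatorname{Supp}(\mathcal F)\}$, and $\operatorname{fdepth} I/J$ is the maximum of $\operatorname{fdepth}\mathcal F$ over all prime filtrations $\mathcal F$ of $I/J$. *)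

From mathcomp Require Import all_boot all_order all_algebra.
From mathcomp Require Import boolp.
Set Implicit Arguments. Unset Strict Implicit. Unset Printing Implicit Defensive.
Import Order.TTheory GRing.Theory Num.Theory.

(* A (Laurent) monomial x^a of K[x_1..x_n, x_j^-1 : j in A] is its exponent
   vector a : 'I_n -> int.  R_A := K[x_1..x_n, x_j^-1 : j in A]
   (so R_set0 = S and R_A = S_f with f = prod_{j in A} x_j).
   A monomial ideal of R_A is the K-span of the monomials it contains, hence
   is determined by the set of their exponents. *)

Definition mono (n : nat) := 'I_n -> int.

Definition inR (n : nat) (A : {set 'I_n}) (b : mono n) : Prop :=
  forall j, j \notin A -> (0 <= b j)%R.

Definition mideal (n : nat) (A : {set 'I_n}) (I : mono n -> Prop) : Prop :=
  (forall a, I a -> inR A a) /\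
  (forall a b c, I a -> inR A b -> (forall j, c j = (a j + b j)%R) -> I c).

(* Extension I R_A of a monomial ideal I (of S) to R_A = S_f. *)
Definition loc (n : nat) (A : {set 'I_n}) (I : mono n -> Prop) : mono n -> Prop :=
  fun c => exists a b, I a /\ inR A b /\ (forall j, c j = (a j + b j)%R).

(* The monomial prime ideal P_Q = (x_j : j in Q) of R_A is a proper (prime)
   ideal iff Q does not meet A.  Monomial exponents of the Z^n-graded module
   R_A / P_Q : *)
Definition quot_deg (n : nat) (A Q : {set 'I_n}) (b : mono n) : Prop :=
  (forall j, j \in Q -> b j = 0%R) /\ (forall j, j \notin A -> (0 <= b j)%R).

(* dim R_A / P_Q = n - |Q|  (for Q disjoint from A). *)
Definition dimq (n : nat) (Q : {set 'I_n}) : nat := (n - #|Q|)%N.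

(* Prime filtration J = Js 0 ⊆ Js 1 ⊆ ... ⊆ Js r = I of I/J over R_A with
   Js i / Js (i-1) ≅ (R_A / P_(Qs i))(- as_ i) as Z^n-graded modules.
   For monomial ideals, the quotient Js i / Js (i-1) is the Z^n-graded module
   with K-basis the monomials of Js i not in Js (i-1), and x_k acting as
   multiplication (or 0 if the product lands in Js (i-1)); it is isomorphic to
   the shift (R_A/P_Q)(-a) exactly when those exponents are a + (exponents of
   R_A/P_Q). *)
Definition prime_filtration (n : nat) (A : {set 'I_n}) (J I : mono n -> Prop)
  (r : nat) (Js : nat -> mono n -> Prop) (Qs : nat -> {set 'I_n})
  (as_ : nat -> mono n) : Prop :=
  [/\ (forall c, Js 0%N c <-> J c) /\ (forall c, Js r c <-> I c),
      forall i, (i <= r)%N -> mideal A (Js i),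
      forall i, (0 < i <= r)%N -> forall c, Js i.-1 c -> Js i c,
      forall i, (0 < i <= r)%N -> Qs i :&: A = set0 &
      forall i, (0 < i <= r)%N -> forall c,
        (Js i c /\ ~ Js i.-1 c) <-> quot_deg A (Qs i) (fun j => (c j - as_ i j)%R)].

(* fdepth of a filtration: min of dim R/P over its support (n if empty,
   which plays the role of +infinity since every dim R/P <= n). *)
Definition filt_fdepth (n : nat) (r : nat) (Qs : nat -> {set 'I_n}) : nat :=
  \big[minn/n]_(1 <= i < r.+1) dimq (Qs i).

Definition fdepth (n : nat) (A : {set 'I_n}) (J I : mono n -> Prop) : nat :=
  \max_(k < n.+1 | `[< exists r Js Qs as_,
          prime_filtration A J I r Js Qs as_ /\ @filt_fdepth n r Qs = k >]) k.

From mathcomp Require Import all_boot all_order all_algebra.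
From mathcomp Require Import boolp.
From mathcomp Require Import zify.
Set Implicit Arguments. Unset Strict Implicit. Unset Printing Implicit Defensive.
Import Order.TTheory GRing.Theory Num.Theory.

(* Localizing at f is exact, so the localization of a prime filtration of I/J
   is a chain of monomial ideals of S_f whose factors are the localizations of
   the factors (S/P)(-a).  Such a factor vanishes when P contains some x_j with
   j in A (x_j acts both invertibly and nilpotently) and becomes (S_f/P S_f)(-a)
   otherwise, with the same dimension.  Dropping the repeated terms yields a
   prime filtration of (I/J)_f whose support is a subset of the original one,
   so its fdepth is at least as large. *)

Definition mulfX n (A : {set 'I_n}) (c : mono n) (t : nat) : mono n :=
  fun j => (c j + (if j \in A then Posz t else 0))%R.

Lemma mulfX_notin n (A : {set 'I_n}) c t j : j \notin A -> mulfX A c t j = c j.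
Proof. by rewrite /mulfX => /negbTE ->; rewrite addr0. Qed.

Lemma inR_set0 n (b : mono n) : inR set0 b <-> forall j, (0 <= b j)%R.
Proof. by split=> Hb j; [apply: Hb; rewrite in_set0 | move=> _; apply: Hb]. Qed.

Lemma leq_abs_sum n (b : mono n) j : (`|b j| <= \sum_(i < n) `|b i|)%N.
Proof. by rewrite (bigD1 j) //= leq_addr. Qed.

Lemma setI_eq0_notin n (Q A : {set 'I_n}) j : Q :&: A = set0 -> j \in Q -> j \notin A.
Proof.
move=> QA jQ; apply/negP => jA.
by have := in_setI j Q A; rewrite QA in_set0 jQ jA.
Qed.

Section MonomialIdealOfS.

Variables (n : nat) (A : {set 'I_n}) (X : mono n -> Prop).
Hypothesis idX : mideal set0 X.

Lemma mideal_mulfX c t t' : X (mulfX A c t) -> (t <= t')%N -> X (mulfX A c t').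
Proof.
case: idX => _ mulX Xct le_tt'.
apply: (mulX _ (fun j => if j \in A then Posz (t' - t) else 0%R) _ Xct).
  by apply/inR_set0 => j; case: (j \in A).
by move=> j; rewrite /mulfX; case: (j \in A) => /=; lia.
Qed.

Lemma locP c : loc A X c <-> exists t, X (mulfX A c t).
Proof.
case: idX => inX mulX; split.
  move=> [a [b [Xa [Rb Ec]]]]; set t := (\sum_(i < n) `|b i|)%N.
  exists t; apply: (mulX a (fun j => b j + (if j \in A then Posz t else 0))%R _ Xa).
    apply/inR_set0 => j; have := leq_abs_sum b j; rewrite -/t.
    by case: (boolP (j \in A)) => jA /=; [lia | have := Rb j jA; lia].
  by move=> j; rewrite /mulfX Ec; lia.
move=> [t Xct]; exists (mulfX A c t), (fun j => if j \in A then - Posz t else 0)%R.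
split=> //; split; first by move=> j /negbTE ->.
by move=> j; rewrite /mulfX; case: (j \in A) => /=; lia.
Qed.

Lemma mideal_loc : mideal A (loc A X).
Proof.
case: idX => inX mulX; split.
  move=> c [a [b [Xa [Rb Ec]]]] j jA; rewrite Ec.
  by have := inX a Xa j; rewrite in_set0 => /(_ isT); have := Rb j jA; lia.
move=> c b d [a [b1 [Xa [Rb1 Ec]]]] Rb Ed.
exists a, (fun j => b1 j + b j)%R; split=> //; split.
  by move=> j jA; have := Rb j jA; have := Rb1 j jA; lia.
by move=> j; rewrite Ed Ec; lia.
Qed.

End MonomialIdealOfS.

Lemma loc_sub n (A : {set 'I_n}) (X Y : mono n -> Prop) c :
  (forall d, X d -> Y d) -> loc A X c -> loc A Y c.
Proof. by move=> XY [a [b [Xa Hb]]]; exists a, b; split=> //; apply: XY. Qed.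

Lemma loc_eq n (A : {set 'I_n}) (X Y : mono n -> Prop) c :
  (forall d, X d <-> Y d) -> loc A X c <-> loc A Y c.
Proof. by move=> XY; split; apply: loc_sub => d /XY. Qed.

Section LocalizedFactor.

Variables (n : nat) (A Q : {set 'I_n}) (Y Z : mono n -> Prop) (a : mono n).
Hypotheses (idY : mideal set0 Y) (idZ : mideal set0 Z).
Hypothesis factorZY :
  forall c, (Z c /\ ~ Y c) <-> quot_deg set0 Q (fun j => (c j - a j)%R).

Lemma loc_factor : Q :&: A = set0 ->
  forall c, (loc A Z c /\ ~ loc A Y c) <-> quot_deg A Q (fun j => (c j - a j)%R).
Proof.
move=> QA c; split.
  move=> [/(locP _ idZ) [t Zct] nYc].
  have nYct : ~ Y (mulfX A c t).
    by move=> Yct; apply: nYc; apply/(locP _ idY); exists t.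
  have [zeroQ ge0] := proj1 (factorZY _) (conj Zct nYct).
  split=> j.
    by move=> jQ; rewrite -(mulfX_notin c t (setI_eq0_notin QA jQ)) zeroQ.
  by move=> jA; rewrite -(mulfX_notin c t jA); apply: ge0; rewrite in_set0.
move=> [zeroQ ge0]; set t := (\sum_(i < n) `|c i - a i|)%N.
(* Once f^t clears the negative exponents of c - a on A, every x^c f^s with
   s >= t lies in the factor Z \ Y. *)
have inZY s : (t <= s)%N -> quot_deg set0 Q (fun j => (mulfX A c s j - a j)%R).
  move=> le_ts; split=> j.
    by move=> jQ; rewrite mulfX_notin ?zeroQ ?(setI_eq0_notin QA jQ).
  move=> _; case: (boolP (j \in A)) => jA; first last.
    by rewrite mulfX_notin //; apply: ge0.
  rewrite /mulfX jA.
  by have := leq_abs_sum (fun i => c i - a i)%R j; rewrite -/t; lia.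
split.
  by apply/(locP _ idZ); exists t; case: (proj2 (factorZY _) (inZY t (leqnn t))).
move=> /(locP _ idY) [s Ycs].
have Ycst := mideal_mulfX idY Ycs (leq_addr t s).
by case: (proj2 (factorZY _) (inZY (s + t)%N (leq_addl _ _))).
Qed.

(* If neither x^c f^(t+1) nor x^c f^(t+2) were in Y, both would lie in the
   factor and so have exponent a j at some j in Q :&: A. *)
Lemma loc_factor_eq0 : (forall c, Y c -> Z c) -> Q :&: A != set0 ->
  forall c, loc A Z c <-> loc A Y c.
Proof.
move=> YZ; case/set0Pn=> j0; rewrite in_setI => /andP [j0Q j0A] c.
split; last exact: loc_sub.
move=> /(locP _ idZ) [t Zct]; apply/(locP _ idY).
case: (pselect (Y (mulfX A c t.+1))) => [Y1|nY1]; first by exists t.+1.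
case: (pselect (Y (mulfX A c t.+2))) => [Y2|nY2]; first by exists t.+2.
have [E1 _] := proj1 (factorZY _) (conj (mideal_mulfX idZ Zct (leqnSn _)) nY1).
have [E2 _] := proj1 (factorZY _) (conj (mideal_mulfX idZ Zct (leqW (leqnSn _))) nY2).
by have := E1 j0 j0Q; have := E2 j0 j0Q; rewrite /mulfX j0A; lia.
Qed.

End LocalizedFactor.

Lemma filt_fdepthS n r (Qs : nat -> {set 'I_n}) :
  filt_fdepth r.+1 Qs = minn (filt_fdepth r Qs) (dimq (Qs r.+1)).
Proof.
rewrite /filt_fdepth /index_iota !subSS !subn0 -(addn1 r) iotaD add1n addn1.
elim: (iota 1 r) => [|y s IH]; first by rewrite /= !big_cons !big_nil minnC.
by rewrite /= !big_cons IH minnA.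
Qed.

Lemma eq_filt_fdepth n r (Qs Qs' : nat -> {set 'I_n}) :
  (forall i, (i <= r)%N -> Qs i = Qs' i) -> filt_fdepth r Qs = filt_fdepth r Qs'.
Proof. by move=> EQ; apply: eq_big_nat => i /andP [_ lt]; rewrite EQ. Qed.

Lemma filt_fdepth_le n r (Qs : nat -> {set 'I_n}) : (filt_fdepth r Qs <= n)%N.
Proof.
elim: r => [|r IH]; first by rewrite /filt_fdepth big_geq.
by rewrite filt_fdepthS geq_min IH.
Qed.

Lemma filt_fdepth_le_fdepth n (A : {set 'I_n}) J I r Js Qs as_ :
  prime_filtration A J I r Js Qs as_ -> (filt_fdepth r Qs <= fdepth A J I)%N.
Proof.
move=> F; have lt : (filt_fdepth r Qs < n.+1)%N by rewrite ltnS filt_fdepth_le.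
apply: (@leq_bigmax_cond _ _ _ (Ordinal lt)) => /=.
by apply/asboolP; exists r, Js, Qs, as_.
Qed.

Section PrimeFiltrationSurgery.

Variables (n : nat) (A : {set 'I_n}) (J : mono n -> Prop).

Lemma prime_filtration_belast (I : mono n -> Prop) r Js Qs as_ :
  prime_filtration A J I r.+1 Js Qs as_ -> prime_filtration A J (Js r) r Js Qs as_.
Proof.
case=> [[J0 _] idJs incJs QsA factorJs]; split=> //.
- by move=> i le_ir; apply: idJs; apply: leqW.
- by move=> i /andP [i0 le_ir]; apply: incJs; rewrite i0 leqW.
- by move=> i /andP [i0 le_ir]; apply: QsA; rewrite i0 leqW.
- by move=> i /andP [i0 le_ir]; apply: factorJs; rewrite i0 leqW.
Qed.

Lemma prime_filtration_eq (I I' : mono n -> Prop) r Js Qs as_ :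
  (forall c, I c <-> I' c) ->
  prime_filtration A J I r Js Qs as_ -> prime_filtration A J I' r Js Qs as_.
Proof. by move=> II' [[J0 Ir] *]; split=> //; split=> // c; rewrite Ir. Qed.

Lemma prime_filtration_rcons (Y Z : mono n -> Prop) r Js Qs as_ Q a :
  prime_filtration A J Y r Js Qs as_ -> mideal A Z -> (forall c, Y c -> Z c) ->
  Q :&: A = set0 ->
  (forall c, (Z c /\ ~ Y c) <-> quot_deg A Q (fun j => (c j - a j)%R)) ->
  prime_filtration A J Z r.+1 (fun i => if (i <= r)%N then Js i else Z)
    (fun i => if i == r.+1 then Q else Qs i) (fun i => if i == r.+1 then a else as_ i).
Proof.
case=> [[J0 Yr] idJs incJs QsA factorJs] idZ YZ QA factorZY.
have top i : (0 < i <= r.+1)%N -> ~~ (i <= r)%N -> i = r.+1.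
  by case/andP=> _ le_ir gt_ir; apply/eqP; rewrite eqn_leq le_ir ltnNge gt_ir.
split.
- by split=> c; rewrite ?leq0n // ltnn.
- by move=> i _; case: ifP => [/idJs|].
- move=> i i_range c /=; case: (boolP (i <= r)%N) => le_ir.
    by rewrite (leq_trans (leq_pred i) le_ir); apply: incJs; case/andP: i_range => ->.
  by rewrite (top i i_range le_ir) leqnn => /Yr /YZ.
- move=> i i_range; case: (boolP (i <= r)%N) => le_ir.
    by rewrite (ltn_eqF (le_ir : i < r.+1)%N); apply: QsA; case/andP: i_range => ->.
  by rewrite (top i i_range le_ir) eqxx.
- move=> i i_range c /=; case: (boolP (i <= r)%N) => le_ir.
    rewrite (leq_trans (leq_pred i) le_ir) (ltn_eqF (le_ir : i < r.+1)%N).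
    by apply: factorJs; case/andP: i_range => ->.
  rewrite (top i i_range le_ir) /= eqxx leqnn -factorZY.
  by split=> -[Zc nY]; split=> // /Yr.
Qed.

End PrimeFiltrationSurgery.

Lemma prime_filtration_loc n (A : {set 'I_n}) r (J I : mono n -> Prop) Js Qs as_ :
  prime_filtration set0 J I r Js Qs as_ ->
  exists r' Js' Qs' as', prime_filtration A (loc A J) (loc A I) r' Js' Qs' as'
    /\ (filt_fdepth r Qs <= filt_fdepth r' Qs')%N.
Proof.
elim: r J I Js Qs as_ => [|r IH] J I Js Qs as_ F.
  case: F => [[J0 I0] idJs _ _ _].
  exists 0%N, (fun _ => loc A (Js 0%N)), Qs, as_; split=> //.
  split; first by split=> c; apply: loc_eq.
  - by move=> i _; apply/mideal_loc/idJs.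
  - by move=> i /andP [/gtn_eqF]; case: i.
  - by move=> i /andP [/gtn_eqF]; case: i.
  - by move=> i /andP [/gtn_eqF]; case: i.
have [r' [Js' [Qs' [as' [F' le_fd]]]]] := IH _ _ _ _ _ (prime_filtration_belast F).
case: F => [[_ Ir] idJs incJs _ factorJs].
have last_range : (0 < r.+1 <= r.+1)%N by rewrite /= leqnn.
have idY := idJs r (leqnSn r); have idZ := idJs r.+1 (leqnn _).
have YZ := incJs _ last_range; have factorZY := factorJs _ last_range.
rewrite filt_fdepthS.
have [QA|QA] := eqVneq (Qs r.+1 :&: A) set0; last first.
  (* The last factor dies in S_f: the localized chain already ends at I_f. *)
  exists r', Js', Qs', as'; split; last by rewrite geq_min le_fd.
  apply: prime_filtration_eq F' => c.
  by rewrite -(loc_factor_eq0 idY idZ factorZY YZ QA); apply: loc_eq.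
have F'' := prime_filtration_rcons F' (mideal_loc A idZ) (fun c => loc_sub (c:=c) YZ) QA
  (loc_factor idY idZ factorZY QA).
eexists _, _, _, _; split; first by apply: prime_filtration_eq F'' => c; apply: loc_eq.
rewrite filt_fdepthS eqxx (@eq_filt_fdepth _ r' _ Qs').
  by rewrite leq_min geq_minr andbT geq_min le_fd.
by move=> i le_ir; rewrite (ltn_eqF (le_ir : i < r'.+1)%N).
Qed.

Theorem theorem5p1 (n : nat) (A : {set 'I_n}) (J I : mono n -> Prop) :
  mideal set0 J -> mideal set0 I -> (forall a, J a -> I a) ->
  (fdepth set0 J I <= fdepth A (loc A J) (loc A I))%N.
Proof.
(* The hypotheses on J and I are implied by any prime filtration of I/J. *)
move=> _ _ _; apply/bigmax_leqP => k /asboolP [r [Js [Qs [as_ [F <-]]]]].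
have [r' [Js' [Qs' [as' [F' le_fd]]]]] := prime_filtration_loc A F.
exact: leq_trans le_fd (filt_fdepth_le_fdepth F').
Qed.
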